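(* Let $X$ be a nontrivial real Banach space. The following assertions are equivalent: (i) $X^*$ has the weak$^*$ strong diameter $2$ property; (ii) $X$ is octahedral; (iii) whenever $E$ is a finite-dimensional subspace of $X$, $n\in\mathbb{N}$, $x_1^*,\dots,x_n^*\in B_{X^*}$, $\varepsilon>0$, and $\varepsilon_0\in(0,\varepsilon)$, there is a $y\in S_X$ such that, whenever $|\gamma_i|\leq 1+\varepsilon_0$ for $i\in\{1,\dots,n\}$, there are $y_i^*\in X^*$ satisfying $y_i^*|_E=x_i^*|_E$, $y_i^*(y)=\gamma_i$, and $\|y_i^*\|\leq 1+\varepsilon$ for all $i\in\{1,\dots,n\}$; (iii') whenever $E$ is a finite-dimensional subspace of $X$, $n\in\mathbb{N}$, $x_1^*,\dots,x_n^*\in B_{X^*}$, and $\varepsilon>0$, there are $y\in S_X$ and $x_{1i}^*,x_{2i}^*\in X^*$, $i\in\{1,\dots,n\}$, satisfying $x_{1i}^*|_E=x_{2i}^*|_E=x_i^*|_E$, $x_{1i}^*(y)-x_{2i}^*(y)>2-\varepsilon$, and $\|x_{1i}^*\|,\|x_{2i}^*\|\leq 1+\varepsilon$ for all $i\in\{1,\dots,n\}$.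
   Context: $B_Z$, $S_Z$ denote the closed unit ball and unit sphere of a Banach space $Z$. A weak$^*$ slice of $B_{X^*}$ is a set $\{x^*\in B_{X^*}: x^*(x)>1-\alpha\}$ with $x\in S_X$, $\alpha>0$. $X^*$ has the weak$^*$ strong diameter $2$ property if every convex combination $\sum_{i=1}^n\lambda_i S_i$ ($n\in\mathbb{N}$, $\lambda_i\ge0$, $\sum\lambda_i=1$, $S_i$ weak$^*$ slices of $B_{X^*}$) has diameter $2$. $X$ is octahedral if for every finite-dimensional subspace $E$ of $X$ and every $\varepsilon>0$ there is a $y\in S_X$ such that $\|x+y\|\geq(1-\varepsilon)(\|x\|+\|y\|)$ for all $x\in E$. *)

From HB Require Import structures.
From mathcomp Require Import all_boot all_order all_algebra.
From mathcomp Require Import all_classical all_reals all_analysis.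
Set Implicit Arguments. Unset Strict Implicit. Unset Printing Implicit Defensive.
Import Order.TTheory GRing.Theory Num.Theory.
Import numFieldNormedType.Exports.
Local Open Scope classical_set_scope.
Local Open Scope ring_scope.

Section Dual.
Context {R : realType} {V : normedModType R}.

Definition is_dual (f : V -> R) : Prop :=
  (forall (a : R) (x y : V), f (a *: x + y) = a * f x + f y) /\ continuous f.

Definition dnorm (f : V -> R) : R :=
  sup [set `|f x| | x in [set x : V | `|x| <= 1]].

Definition dual_ball : set (V -> R) := [set f | is_dual f /\ dnorm f <= 1].

Definition wstar_slice (x : V) (alpha : R) : set (V -> R) :=
  [set f | dual_ball f /\ f x > 1 - alpha].

Definition conv_comb (n : nat) (lambda : 'I_n -> R) (S : 'I_n -> set (V -> R))
  : set (V -> R) :=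
  [set h | exists f : 'I_n -> (V -> R), (forall i, S i (f i)) /\
           h = (fun v => \sum_(i < n) lambda i * f i v)].

Definition ddiam (C : set (V -> R)) : R :=
  sup [set d | exists f g, C f /\ C g /\ d = dnorm (fun v => f v - g v)].

Definition wstar_SD2P : Prop :=
  forall (n : nat) (lambda : 'I_n -> R) (x : 'I_n -> V) (alpha : 'I_n -> R),
    (forall i, 0 <= lambda i) -> \sum_(i < n) lambda i = 1 ->
    (forall i, `|x i| = 1) -> (forall i, 0 < alpha i) ->
    ddiam (conv_comb lambda (fun i => wstar_slice (x i) (alpha i))) = 2.

(* Finite-dimensional subspaces are the linear spans of finite families. *)
Definition span_of (m : nat) (e : 'I_m -> V) : set V :=
  [set x | exists c : 'I_m -> R, x = \sum_(j < m) c j *: e j].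

Definition octahedral : Prop :=
  forall (m : nat) (e : 'I_m -> V) (eps : R), 0 < eps ->
    exists y : V, `|y| = 1 /\
      forall x, span_of e x -> `|x + y| >= (1 - eps) * (`|x| + `|y|).

Definition prop_iii : Prop :=
  forall (m : nat) (e : 'I_m -> V) (n : nat) (xs : 'I_n -> (V -> R))
         (eps eps0 : R),
    (forall i, dual_ball (xs i)) -> 0 < eps -> 0 < eps0 -> eps0 < eps ->
    exists y : V, `|y| = 1 /\
      forall gamma : 'I_n -> R, (forall i, `|gamma i| <= 1 + eps0) ->
        exists ys : 'I_n -> (V -> R), forall i,
          is_dual (ys i) /\ (forall z, span_of e z -> ys i z = xs i z) /\
          ys i y = gamma i /\ dnorm (ys i) <= 1 + eps.

Definition prop_iii' : Prop :=
  forall (m : nat) (e : 'I_m -> V) (n : nat) (xs : 'I_n -> (V -> R)) (eps : R),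
    (forall i, dual_ball (xs i)) -> 0 < eps ->
    exists (y : V) (x1 x2 : 'I_n -> (V -> R)), `|y| = 1 /\
      forall i,
        is_dual (x1 i) /\ is_dual (x2 i) /\
        (forall z, span_of e z -> x1 i z = xs i z /\ x2 i z = xs i z) /\
        x1 i y - x2 i y > 2 - eps /\
        dnorm (x1 i) <= 1 + eps /\ dnorm (x2 i) <= 1 + eps.

End Dual.

From HB Require Import structures.
From mathcomp Require Import all_boot all_order all_algebra.
From mathcomp Require Import all_classical all_reals all_analysis.
From mathcomp Require Import ring lra.
Import Order.TTheory GRing.Theory Num.Theory.
Import numFieldNormedType.Exports.
Local Open Scope classical_set_scope.
Local Open Scope ring_scope.

(* (ii) => (iii): octahedrality in a direction [y] gives
   [`|x + t y| >= (1 - d) (`|x| + `|t|)] on [E + R y], so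
   [x + t y |-> x_i^*(x) + t gamma_i] has norm at most [1 + eps] there and
   extends by Hahn-Banach.  (iii) => (iii') takes [gamma_i = +-(1 + eps/2)].
   (iii') => (i): for norming functionals [x_i^*] of the slice points, the two
   families of extensions, scaled into the unit ball, lie in the slices and
   their convex combinations differ by almost [2] at [y].
   (i) => (ii): take the slices at a finite net [w_k] of the unit sphere of
   [E].  Two convex combinations at distance almost [2], evaluated at a nearly
   norming point [x0], force [a_k(x0) ~ 1] for slice functionals [a_k] with
   [a_k(w_k) ~ 1], so [`|w_k + x0| ~ 2] and [x0 / `|x0|] witnesses
   octahedrality. *)

Section LinearFunctionals.
Context {R : realType} {V : normedModType R}.
Implicit Types (f : V -> R).

Definition linear_fun f := forall (a : R) (x y : V), f (a *: x + y) = a * f x + f y.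

Lemma linear_fun0 {f} : linear_fun f -> f 0 = 0.
Proof. by move=> hf; have := hf 1 0 0; rewrite scaler0 addr0 mul1r; lra. Qed.

Lemma linear_funZ {f} : linear_fun f -> forall a x, f (a *: x) = a * f x.
Proof. by move=> hf a x; have := hf a x 0; rewrite addr0 linear_fun0 // addr0. Qed.

Lemma linear_funD {f} : linear_fun f -> forall x y, f (x + y) = f x + f y.
Proof. by move=> hf x y; have := hf 1 x y; rewrite scale1r mul1r. Qed.

Lemma linear_funB {f} : linear_fun f -> forall x y, f (x - y) = f x - f y.
Proof.
by move=> hf x y; rewrite linear_funD // -scaleN1r linear_funZ // mulN1r.
Qed.

Lemma dual_linear_fun {f} : is_dual f -> linear_fun f.
Proof. by case. Qed.

Lemma bounded_linear_continuous f (c : R) :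
  linear_fun f -> (forall x, `|f x| <= c * `|x|) -> continuous f.
Proof.
move=> hf hb x; apply/cvgrPdist_lt => e e0.
have c1 : 0 < `|c| + 1 by rewrite ltr_pwDr.
near=> t; rewrite -linear_funB //; apply: le_lt_trans (hb _) _.
apply: (@le_lt_trans _ _ ((`|c| + 1) * `|x - t|)).
  by rewrite ler_wpM2r // (le_trans (ler_norm c)) // lerDl.
rewrite -ltr_pdivlMl //; near: t.
by apply: cvgr_dist_lt => //; rewrite mulrC divr_gt0.
Unshelve. all: by end_near. Qed.

Lemma dual_bounded {f} : is_dual f -> exists2 M, 0 < M & forall x, `|f x| <= M * `|x|.
Proof.
move=> [hf hc].
have /(_ _ 1 ltr01) := cvgr_dist_lt _ _ (hc 0).
rewrite linear_fun0 // => /nbhs_norm0P [d d0 hd].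
exists (2 / d) => [|x]; first by rewrite divr_gt0.
have [->|x0] := eqVneq x 0; first by rewrite linear_fun0 // !normr0 mulr0.
have nx : 0 < `|x| by rewrite normr_gt0.
pose s := d / (2 * `|x|).
have s0 : 0 < s by rewrite divr_gt0 // mulr_gt0.
have sx : `|s *: x| = d / 2 by rewrite normrZ gtr0_norm // /s; field; rewrite gt_eqF.
have /hd : `|s *: x| < d by rewrite sx ltr_pdivrMr // ltr_pMr // ltr1n.
rewrite /= sub0r normrN linear_funZ // normrM gtr0_norm // -ltr_pdivlMl // => hlt.
apply/ltW/(lt_le_trans hlt); rewrite /s mulr1 invf_div.
by rewrite le_eqVlt; apply/orP; left; apply/eqP; field; rewrite gt_eqF.
Qed.

Lemma dnorm_has_sup {f M} : (forall x, `|f x| <= M * `|x|) ->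
  has_sup [set `|f x| | x in [set x : V | `|x| <= 1]].
Proof.
move=> hb; split; first by exists `|f 0|, 0; rewrite //= normr0.
exists `|M| => _ [z z1 <-]; apply: le_trans (hb z) _.
apply: (@le_trans _ _ (`|M| * `|z|)); first by rewrite ler_wpM2r // ler_norm.
by rewrite -[leRHS]mulr1 ler_wpM2l.
Qed.

Lemma le_dnorm {f M} : (forall x, `|f x| <= M * `|x|) ->
  forall x, `|x| <= 1 -> `|f x| <= dnorm f.
Proof.
by move=> hb x x1; apply: sup_upper_bound; [exact: dnorm_has_sup hb|exists x].
Qed.

Lemma dnorm_adherent {f M} {eps : R} : (forall x, `|f x| <= M * `|x|) -> 0 < eps ->
  exists2 x, `|x| <= 1 & dnorm f - eps < `|f x|.
Proof.
by move=> hb e0; have [_ [x x1 <-] hx] := sup_adherent e0 (dnorm_has_sup hb); exists x.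
Qed.

Lemma dnorm_le {f c} : 0 <= c -> (forall x, `|f x| <= c * `|x|) -> dnorm f <= c.
Proof.
move=> c0 hb; apply: ge_sup; first by exists `|f 0|, 0; rewrite //= normr0.
by move=> _ [z z1 <-]; apply: le_trans (hb z) _; rewrite -[leRHS]mulr1 ler_wpM2l.
Qed.

Lemma dual_norm_le {f} : is_dual f -> forall x, `|f x| <= dnorm f * `|x|.
Proof.
move=> hd; have hf := dual_linear_fun hd; have [M _ hb] := dual_bounded hd.
move=> x; have [->|x0] := eqVneq x 0; first by rewrite linear_fun0 // !normr0 mulr0.
have nx : 0 < `|x| by rewrite normr_gt0.
have := le_dnorm hb (`|x|^-1 *: x).
rewrite normrZ normfV normr_id mulVf ?gt_eqF // lexx linear_funZ // normrM normfV normr_id.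
by move=> /(_ isT); rewrite ler_pdivrMl // mulrC.
Qed.

Lemma dual_ball_le {f} : dual_ball f -> forall x, `|f x| <= `|x|.
Proof.
move=> [hd f1] x; apply: le_trans (dual_norm_le hd x) _.
by rewrite -[leRHS]mul1r ler_wpM2r.
Qed.

Lemma dual_ballP f : linear_fun f -> (forall x, `|f x| <= `|x|) -> dual_ball f.
Proof.
move=> hf hb; have hb1 x : `|f x| <= 1 * `|x| by rewrite mul1r.
by split; [split=> //; apply: bounded_linear_continuous hb1|exact: dnorm_le ler01 hb1].
Qed.

Lemma dual_ball_divr f (c : R) : 0 < c -> is_dual f -> dnorm f <= c ->
  dual_ball (fun v => c^-1 * f v).
Proof.
move=> c0 hd fc; apply: dual_ballP => [a x y|x].
  by rewrite (dual_linear_fun hd); ring.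
rewrite normrM gtr0_norm ?invr_gt0 // ler_pdivrMl //.
by apply: le_trans (dual_norm_le hd x) _; rewrite ler_wpM2r.
Qed.

End LinearFunctionals.

Lemma scale_add_shift {R : numDomainType} {V : lmodType R} (a t1 t2 : R) (g1 g2 v : V) :
  a *: (g1 + t1 *: v) + (g2 + t2 *: v) = (a *: g1 + g2) + (a * t1 + t2) *: v.
Proof.
by rewrite scalerDr scalerA scalerDl -!addrA; congr (_ + _); rewrite addrCA.
Qed.

Section HahnBanach.
Context {R : realType} {V : normedModType R}.
Variable c : R.
Hypothesis c_ge0 : 0 <= c.

(* The graph of a linear functional on a subspace, dominated by [c * `|_|],
   as a relation; functionality is a consequence (dominated_graph_uniq). *)
Definition dominated_graph (G : set (V * R)) :=
  [/\ G (0, 0),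
    (forall a v1 r1 v2 r2, G (v1, r1) -> G (v2, r2) -> G (a *: v1 + v2, a * r1 + r2)) &
    (forall v r, G (v, r) -> r <= c * `|v|)].

Lemma dominated_graph_uniq {G v r1 r2} :
  dominated_graph G -> G (v, r1) -> G (v, r2) -> r1 = r2.
Proof.
move=> [_ GD Gc] h1 h2.
have := Gc _ _ (GD (-1) _ _ _ _ h1 h2); have := Gc _ _ (GD (-1) _ _ _ _ h2 h1).
by rewrite scaleN1r addNr normr0 mulr0; lra.
Qed.

Lemma dominated_graphZ {G v r} a :
  dominated_graph G -> G (v, r) -> G (a *: v, a * r).
Proof. by move=> [G0 GD _] h; have := GD a _ _ _ _ h G0; rewrite !addr0. Qed.

Lemma dominated_graph_norm {G v r} :
  dominated_graph G -> G (v, r) -> `|r| <= c * `|v|.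
Proof.
move=> gG h; have [_ _ Gc] := gG.
have := Gc _ _ (dominated_graphZ (-1) gG h); rewrite scaleN1r normrN mulN1r.
by have := Gc _ _ h; rewrite ler_norml; lra.
Qed.

Definition graph_ext (G : set (V * R)) (v : V) (a : R) : set (V * R) :=
  [set p | exists g r t, G (g, r) /\ p = (g + t *: v, r + t * a)].

(* The admissible values [a] of the extension at [v] form the interval
   between these two bounds; it is nonempty by the triangle inequality. *)
Lemma ext_value_exists {G} v : dominated_graph G -> exists a, forall g r, G (g, r) ->
  r - c * `|g - v| <= a /\ a <= c * `|g + v| - r.
Proof.
move=> [G0 GD Gc].
have key g1 r1 g2 r2 : G (g1, r1) -> G (g2, r2) ->
    r1 - c * `|g1 - v| <= c * `|g2 + v| - r2.
  move=> h1 h2; have := Gc _ _ (GD 1 _ _ _ _ h1 h2); rewrite scale1r mul1r.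
  have : `|g1 + g2| <= `|g1 - v| + `|g2 + v|.
    by rewrite (_ : g1 + g2 = (g1 - v) + (g2 + v)) ?ler_normD // addrACA addNr addr0.
  by move=> /(ler_wpM2l c_ge0); lra.
pose S := [set x | exists g r, G (g, r) /\ x = r - c * `|g - v|].
have supS : has_sup S.
  split; first by exists (0 - c * `|0 - v|), 0, 0.
  by exists (c * `|0 + v| - 0) => _ [g [r [h ->]]]; exact: key.
exists (sup S) => g r h; split; first by apply: sup_upper_bound => //; exists g, r.
by apply: ge_sup; [case: supS|move=> _ [g' [r' [h' ->]]]; exact: key].
Qed.

Lemma dominated_graph_ext {G} v : dominated_graph G ->
  exists a, dominated_graph (graph_ext G v a).
Proof.
move=> gG; have [G0 GD Gc] := gG; have [a ha] := ext_value_exists v gG.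
exists a; split.
- by exists 0, 0, 0; rewrite scale0r mul0r !addr0.
- move=> b v1 r1 v2 r2 [g1 [s1 [t1 [h1 [-> ->]]]]] [g2 [s2 [t2 [h2 [-> ->]]]]].
  exists (b *: g1 + g2), (b * s1 + s2), (b * t1 + t2); split; first exact: GD.
  by rewrite scale_add_shift; congr (_, _); ring.
- move=> w s [g [r [t [h [-> ->]]]]].
  have [t0|t0|->] := ltgtP t 0; last by rewrite scale0r mul0r !addr0; exact: Gc.
  + pose u := - t; have u0 : 0 < u by rewrite /u oppr_gt0.
    have [+ _] := ha _ _ (dominated_graphZ u^-1 gG h).
    have -> : g + t *: v = u *: (u^-1 *: g - v).
      by rewrite scalerDr scalerA mulfV ?gt_eqF // scale1r scalerN /u scaleNr opprK.
    rewrite normrZ gtr0_norm // => /(ler_wpM2l (ltW u0)).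
    by rewrite mulrBr mulrA mulfV ?gt_eqF // mul1r /u; lra.
  + have [_] := ha _ _ (dominated_graphZ t^-1 gG h).
    have -> : g + t *: v = t *: (t^-1 *: g + v).
      by rewrite scalerDr scalerA mulfV ?gt_eqF // scale1r.
    rewrite normrZ gtr0_norm // => /(ler_wpM2l (ltW t0)).
    by rewrite mulrBr (mulrA t t^-1) mulfV ?gt_eqF // mul1r mulrCA; lra.
Qed.

Lemma exists_maximal_dominated_graph {G0} : dominated_graph G0 ->
  exists A, dominated_graph (A `|` G0) /\
    forall B, A `<` B -> ~ dominated_graph (B `|` G0).
Proof.
move=> g0; apply: Zorn_bigcup => F FP Ftot.
set U := \bigcup_(X in F) X `|` G0.
have sub X : F X -> X `|` G0 `<=` U by move=> FX p [Xp|Gp]; [left; exists X|right].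
have two p1 p2 : U p1 -> U p2 -> exists H, [/\ dominated_graph H, H p1, H p2 & H `<=` U].
  move=> [[X1 FX1 h1]|h1] [[X2 FX2 h2]|h2].
  - have [s12|s21] := Ftot _ _ FX1 FX2.
    + by exists (X2 `|` G0); split; [exact: FP|left; exact: s12|left|exact: sub].
    + by exists (X1 `|` G0); split; [exact: FP|left|left; exact: s21|exact: sub].
  - by exists (X1 `|` G0); split; [exact: FP|left|right|exact: sub].
  - by exists (X2 `|` G0); split; [exact: FP|right|left|exact: sub].
  - by exists G0; split => // p Gp; right.
split; first by right; case: g0.
- by move=> a v1 r1 v2 r2 h1 h2; have [H [[_ HD _] H1 H2 HU]] := two _ _ h1 h2; exact/HU/HD.
- by move=> v r h; have [H [[_ _ Hc] H1 _ _]] := two _ _ h h; exact: Hc.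
Qed.

Lemma maximal_dominated_graph_total {G0 A} : dominated_graph G0 ->
  dominated_graph (A `|` G0) -> (forall B, A `<` B -> ~ dominated_graph (B `|` G0)) ->
  forall v, exists r, (A `|` G0) (v, r).
Proof.
move=> g0 gA Amax v; apply: contrapT => nv.
have [a ga] := dominated_graph_ext v gA.
have ext_ind p : (A `|` G0) p -> graph_ext (A `|` G0) v a p.
  by case: p => w r Gp; exists w, r, 0; rewrite scale0r mul0r !addr0.
apply: (Amax (graph_ext (A `|` G0) v a)).
  split=> [p Ap|/(_ (v, a)) h]; first by apply: ext_ind; left.
  apply: nv; exists a; left; apply: h; exists 0, 0, 1.
  by split; [right; case: g0|rewrite scale1r mul1r !add0r].
suff -> : graph_ext (A `|` G0) v a `|` G0 = graph_ext (A `|` G0) v a by [].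
by apply/seteqP; split=> [p [//|Gp]|p]; [apply: ext_ind; right|left].
Qed.

Lemma hahn_banach {G0} : dominated_graph G0 -> exists f : V -> R, [/\ is_dual f,
  forall v r, G0 (v, r) -> f v = r & forall x, `|f x| <= c * `|x|].
Proof.
move=> g0; have [A [gG Amax]] := exists_maximal_dominated_graph g0.
have tot := maximal_dominated_graph_total g0 gG Amax.
pose f v := xget 0 (fun r => (A `|` G0) (v, r)).
have fG v : (A `|` G0) (v, f v) by exact: (xgetPex 0 (tot v)).
have fE v r : (A `|` G0) (v, r) -> f v = r by move=> h; exact: dominated_graph_uniq gG (fG v) h.
have fb x : `|f x| <= c * `|x| by exact: dominated_graph_norm gG (fG x).
have hf : linear_fun f by move=> a x y; apply: fE; have [_ GD _] := gG; exact: GD.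
exists f; split=> // [|v r h]; first by split=> //; exact: bounded_linear_continuous fb.
by apply: fE; right.
Qed.

End HahnBanach.

Arguments hahn_banach {R V c} c_ge0 {G0}.

Lemma exists_norming_functional {R : realType} {V : normedModType R} (x : V) :
  exists f : V -> R, dual_ball f /\ f x = `|x|.
Proof.
pose G0 := [set p : V * R | exists t : R, p = (t *: x, t * `|x|)].
have g0 : dominated_graph 1 G0.
  split.
  - by exists 0; rewrite scale0r mul0r.
  - move=> a v1 r1 v2 r2 [t1 [-> ->]] [t2 [-> ->]]; exists (a * t1 + t2).
    by rewrite scalerDl scalerA mulrDl mulrA.
  - by move=> v r [t [-> ->]]; rewrite mul1r normrZ ler_wpM2r // ler_norm.
have [f [fd fG fb]] := hahn_banach ler01 g0.
exists f; split; first by apply: dual_ballP (dual_linear_fun fd) _ => y; rewrite -[leRHS]mul1r.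
by have := fG (1 *: x) (1 * `|x|); rewrite scale1r mul1r; apply; exists 1; rewrite scale1r mul1r.
Qed.

Section Spans.
Context {R : realType} {V : normedModType R} {m : nat} {e : 'I_m -> V}.

Lemma span0 : span_of e 0.
Proof. by exists (fun=> 0); rewrite big1 // => i _; rewrite scale0r. Qed.

Lemma spanZD a {x y} : span_of e x -> span_of e y -> span_of e (a *: x + y).
Proof.
move=> [cx ->] [cy ->]; exists (fun j => a * cx j + cy j).
rewrite scaler_sumr -big_split /=; apply: eq_bigr => j _.
by rewrite scalerDl scalerA.
Qed.

Lemma spanZ a {x} : span_of e x -> span_of e (a *: x).
Proof. by move=> sx; rewrite -[_ *: x]addr0; apply: spanZD sx span0. Qed.

Lemma span_gen i : span_of e (e i).
Proof.
exists (fun j => (j == i)%:R); rewrite (bigD1 i) //= eqxx scale1r big1 ?addr0 //.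
by move=> j /negbTE ->; rewrite scale0r.
Qed.

End Spans.

Section OctahedralDual.
Context {R : realType} {V : normedModType R}.

Lemma octahedral_scaled {m} {e : 'I_m -> V} {y : V} {d : R} : 0 <= d -> `|y| = 1 ->
  (forall x, span_of e x -> `|x + y| >= (1 - d) * (`|x| + `|y|)) ->
  forall x t, span_of e x -> `|x + t *: y| >= (1 - d) * (`|x| + `|t|).
Proof.
move=> d0 y1 hy x t sx.
have [->|t0] := eqVneq t 0.
  by rewrite scale0r !addr0 normr0; have := normr_ge0 x; nra.
have nt : 0 < `|t| by rewrite normr_gt0.
have := hy _ (spanZ t^-1 sx); rewrite y1 => /(ler_wpM2l (ltW nt)).
rewrite -normrZ scalerDr scalerA mulfV // scale1r normrZ normfV.
suff -> : `|t| * ((1 - d) * (`|t|^-1 * `|x| + 1)) = (1 - d) * (`|x| + `|t|) by [].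
by field; rewrite gt_eqF.
Qed.

(* Octahedrality in the direction [y] with constant [k] makes the functional
   [x + t y |-> f x + t gamma] on [span e + R y] bounded by [c]. *)
Lemma dual_extension_along {m} {e : 'I_m -> V} {y : V} {f : V -> R} (gamma c k : R) :
  dual_ball f -> 0 <= c -> 1 <= c * k -> `|gamma| <= c * k ->
  (forall x t, span_of e x -> `|x + t *: y| >= k * (`|x| + `|t|)) ->
  exists g : V -> R, [/\ is_dual g, forall z, span_of e z -> g z = f z,
    g y = gamma & dnorm g <= c].
Proof.
move=> hf c0 ck gk hk; have lf := dual_linear_fun hf.1.
pose G0 := [set p | exists x t, span_of e x /\ p = (x + t *: y, f x + t * gamma)].
have g0 : dominated_graph c G0.
  split.
  - by exists 0, 0; split; [exact: span0|rewrite scale0r mul0r !addr0 linear_fun0].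
  - move=> a v1 r1 v2 r2 [x1 [t1 [s1 [-> ->]]]] [x2 [t2 [s2 [-> ->]]]].
    exists (a *: x1 + x2), (a * t1 + t2); split; first exact: spanZD.
    by rewrite scale_add_shift lf; congr (_, _); ring.
  - move=> v r [x [t [sx [-> ->]]]].
    have fx := dual_ball_le hf x; have := ler_norm (f x).
    have tg : t * gamma <= `|t| * (c * k).
      by apply: le_trans (ler_norm _) _; rewrite normrM ler_wpM2l.
    have := ler_wpM2l c0 (hk x t sx); have := normr_ge0 x; have := normr_ge0 t.
    nra.
have [g [gd gG gc]] := hahn_banach c0 g0.
exists g; split => //.
- by move=> z sz; apply: gG; exists z, 0; rewrite scale0r mul0r !addr0.
- have := gG (0 + 1 *: y) (f 0 + 1 * gamma).
  rewrite add0r scale1r linear_fun0 // add0r mul1r; apply.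
  by exists 0, 1; split; [exact: span0|rewrite add0r scale1r linear_fun0 // add0r mul1r].
- exact: dnorm_le.
Qed.

Lemma octahedral_prop_iii : @octahedral R V -> @prop_iii R V.
Proof.
move=> oct m e n xs eps eps0 hxs he he0 hlt.
pose d := (eps - eps0) / (1 + eps).
have e1 : 0 < 1 + eps by lra.
have hd : (1 + eps) * (1 - d) = 1 + eps0 by rewrite /d; field; rewrite gt_eqF.
have d0 : 0 < d by rewrite /d divr_gt0 //; lra.
have [y [y1 hy]] := oct m e d d0.
exists y; split => // gamma hg.
have ext i := dual_extension_along (gamma i) (1 + eps) (1 - d) (hxs i) (ltW e1)
  ltac:(rewrite hd; lra) ltac:(by rewrite hd) (octahedral_scaled (ltW d0) y1 hy).
have [ys hys] := choice ext.
by exists ys => i; have [? ? ? ?] := hys i.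
Qed.

Lemma prop_iii_iii' : @prop_iii R V -> @prop_iii' R V.
Proof.
move=> h3 m e n xs eps hxs he.
have [y [y1 H]] := h3 m e n xs eps (eps / 2) hxs he ltac:(by rewrite divr_gt0) ltac:(lra).
have [ys1 hy1] := H (fun=> 1 + eps / 2) ltac:(by move=> i; rewrite ger0_norm //; lra).
have [ys2 hy2] := H (fun=> - (1 + eps / 2)) ltac:(by move=> i; rewrite normrN ger0_norm //; lra).
exists y, ys1, ys2; split => // i.
have [d1 [a1 [v1 n1]]] := hy1 i; have [d2 [a2 [v2 n2]]] := hy2 i.
do 2 (split => //); split; first by move=> z sz; split; [exact: a1|exact: a2].
by rewrite v1 v2; lra.
Qed.

Lemma conv_comb_dual_ball_le {n} {lam : 'I_n -> R} {S : 'I_n -> set (V -> R)} {h} :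
  (forall i, 0 <= lam i) -> \sum_(i < n) lam i = 1 ->
  (forall i f, S i f -> dual_ball f) -> conv_comb lam S h ->
  forall v, `|h v| <= `|v|.
Proof.
move=> hl hs hS [f [hf ->]] v; apply: le_trans (ler_norm_sum _ _ _) _.
apply: (@le_trans _ _ (\sum_(i < n) lam i * `|v|)); last by rewrite -mulr_suml hs mul1r.
apply: ler_sum => i _; rewrite normrM ger0_norm // ler_wpM2l //.
exact: dual_ball_le (hS _ _ (hf i)) v.
Qed.

Lemma conv_comb_dist_le {n} {lam : 'I_n -> R} {S : 'I_n -> set (V -> R)} {h g} :
  (forall i, 0 <= lam i) -> \sum_(i < n) lam i = 1 ->
  (forall i f, S i f -> dual_ball f) -> conv_comb lam S h -> conv_comb lam S g ->
  forall v, `|h v - g v| <= 2 * `|v|.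
Proof.
move=> hl hs hS Sh Sg v; apply: le_trans (ler_normB _ _) _.
by have := conv_comb_dual_ball_le hl hs hS Sh v; have := conv_comb_dual_ball_le hl hs hS Sg v; lra.
Qed.

(* The slice functionals are the extensions of (iii') for norming functionals
   of the slice points, rescaled into the unit ball. *)
Lemma prop_iii'_slice_pair {n} {lam : 'I_n -> R} {x : 'I_n -> V} {al : 'I_n -> R} {eps} :
  @prop_iii' R V -> (forall i, 0 <= lam i) -> \sum_(i < n) lam i = 1 ->
  (forall i, `|x i| = 1) -> 0 < eps -> (forall i, eps <= al i) ->
  let S := conv_comb lam (fun i => wstar_slice (x i) (al i)) in
  exists f g, [/\ S f, S g & (2 - eps) / (1 + eps) <= dnorm (fun v => f v - g v)].
Proof.
move=> h3 hl hs hx he hal S.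
have [f hf] := choice (fun i => exists_norming_functional (x i)).
have [y [x1 [x2 [y1 H]]]] := h3 n x n f eps (fun i => (hf i).1) he.
have e1 : 0 < 1 + eps by lra.
have slice (g : 'I_n -> V -> R) i : is_dual (g i) ->
    (forall z, span_of x z -> g i z = f i z) -> dnorm (g i) <= 1 + eps ->
    wstar_slice (x i) (al i) (fun v => (1 + eps)^-1 * g i v).
  move=> gd gf gn; split; first exact: dual_ball_divr.
  rewrite /= gf; last exact: span_gen.
  rewrite (hf i).2 hx mulr1 -[X in _ < X]mulr1 ltr_pdivlMl //.
  by have := hal i; nra.
pose g1 i v := (1 + eps)^-1 * x1 i v; pose g2 i v := (1 + eps)^-1 * x2 i v.
have Sg1 : S (fun v => \sum_(i < n) lam i * g1 i v).
  by exists g1; split => // i; have [d1 [_ [a [_ [n1 _]]]]] := H i; apply: slice => // z /a [].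
have Sg2 : S (fun v => \sum_(i < n) lam i * g2 i v).
  by exists g2; split => // i; have [_ [d2 [a [_ [_ n2]]]]] := H i; apply: slice => // z /a [].
have hS i h : wstar_slice (x i) (al i) h -> dual_ball h by case.
exists (fun v => \sum_(i < n) lam i * g1 i v), (fun v => \sum_(i < n) lam i * g2 i v).
split => //; apply: le_trans (le_dnorm (conv_comb_dist_le hl hs hS Sg1 Sg2) y _) => /=;
  last by rewrite y1.
apply: le_trans (ler_norm _); rewrite -sumrB.
apply: (@le_trans _ _ (\sum_(i < n) lam i * ((2 - eps) / (1 + eps)))).
  by rewrite -mulr_suml hs mul1r.
apply: ler_sum => i _; rewrite /g1 /g2 -mulrBr ler_wpM2l // -mulrBr [leLHS]mulrC.
rewrite ler_wpM2l ?invr_ge0 ?(ltW e1) //.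
by have [_ [_ [_ [/ltW ? _]]]] := H i.
Qed.

End OctahedralDual.

Lemma exists_lower_bound {R : realFieldType} {n} {al : 'I_n -> R} :
  (forall i, 0 < al i) -> exists2 k, 0 < k & forall i, k <= al i.
Proof.
move=> hal; pose k := (1 + \sum_(i < n) (al i)^-1)^-1.
have inv_ge0 (P : pred 'I_n) : 0 <= \sum_(i < n | P i) (al i)^-1.
  by apply: sumr_ge0 => i _; rewrite invr_ge0 ltW.
have s0 := inv_ge0 xpredT.
exists k => [|i]; first by rewrite invr_gt0; lra.
rewrite -[al i]invrK lef_pV2 ?posrE ?invr_gt0 //; last by lra.
by rewrite (bigD1 i) //=; have := inv_ge0 (predC1 i); lra.
Qed.

Lemma sup_eq_of_approx {R : realType} {S : set R} {b k : R} : 0 < k ->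
  (forall d, S d -> d <= b) ->
  (forall eps, 0 < eps -> eps <= k -> exists2 d, S d & b - eps <= d) -> sup S = b.
Proof.
move=> k0 ub approx; have [d0 S0 _] := approx k k0 (lexx k).
have supS : has_sup S by split; [exists d0|exists b].
apply/le_anti/andP; split; first by apply: ge_sup; [exists d0|].
rewrite leNgt; apply/negP => hlt.
pose eps := Order.min k ((b - sup S) / 2).
have eps0 : 0 < eps by rewrite lt_min k0 divr_gt0 //; lra.
have [ek ed] : eps <= k /\ eps <= (b - sup S) / 2 by apply/andP; rewrite -le_min.
have [d Sd hd] := approx eps eps0 ek; have := sup_upper_bound supS Sd; lra.
Qed.

Lemma prop_iii'_wstar_SD2P {R : realType} {V : normedModType R} :
  @prop_iii' R V -> @wstar_SD2P R V.
Proof.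
move=> h3 n lam x al hl hs hx ha; set S := conv_comb _ _.
have hS i h : wstar_slice (x i) (al i) h -> dual_ball h by case.
have [k k0 hk] := exists_lower_bound ha.
rewrite /ddiam; apply: (sup_eq_of_approx k0).
  by move=> _ [f [g [Sf [Sg ->]]]]; apply: dnorm_le => //; exact: conv_comb_dist_le Sf Sg.
move=> eps eps0 ek; have e3 : 0 < eps / 3 by rewrite divr_gt0.
have e3k i : eps / 3 <= al i by apply: le_trans (hk i); lra.
have [f [g [Sf Sg fg]]] := prop_iii'_slice_pair h3 hl hs hx e3 e3k.
exists (dnorm (fun v => f v - g v)); first by exists f, g.
by apply: le_trans fg; rewrite ler_pdivlMr; [nra|lra].
Qed.

Lemma exists_grid {R : realType} (T h : R) : 0 < h -> exists G : seq R,
  forall t, `|t| <= T -> exists2 s, s \in G & `|t - s| <= h.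
Proof.
move=> h0; exists [seq - T + k%:R * h | k <- iota 0 (Num.truncn (2 * T / h)).+1].
move=> t tT; have /andP[tl tr] : - T <= t <= T by rewrite -ler_norml.
pose q := (t + T) / h.
have q0 : 0 <= q by rewrite /q divr_ge0 //; [lra|exact: ltW].
have /andP[kq qk] := truncn_itv q0; set k := Num.truncn q in kq qk.
exists (- T + k%:R * h).
  apply/mapP; exists k => //; rewrite mem_iota add0n /= ltnS.
  rewrite /k truncn_le_nat; apply: le_lt_trans (truncnS_gt _).
  by rewrite /q ler_pM2r ?invr_gt0 //; lra.
have -> : t - (- T + k%:R * h) = h * (q - k%:R) by rewrite /q; field; rewrite gt_eqF.
rewrite normrM gtr0_norm // ger0_norm; last by lra.
by rewrite -[leRHS]mulr1 ler_wpM2l ?ltW //; lra.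
Qed.

Section SpanNet.
Context {R : realType} {V : normedModType R}.

Definition span_net {m} (e : 'I_m -> V) := forall r dl : R, 0 < dl ->
  exists L : seq V, forall x, span_of e x -> `|x| <= r ->
    exists2 z, z \in L & `|x - z| <= dl.

Lemma span_of_recr {m} {e : 'I_m.+1 -> V} {x} : span_of e x ->
  exists x' t, span_of (fun j : 'I_m => e (widen_ord (leqnSn m) j)) x' /\
    x = x' + t *: e ord_max.
Proof.
move=> [c ->]; rewrite big_ord_recr /=.
by exists (\sum_(i < m) c (widen_ord (leqnSn m) i) *: e (widen_ord (leqnSn m) i)), (c ord_max);
  split => //; eexists.
Qed.

Section Recr.
Variables (m : nat) (e : 'I_m.+1 -> V).
Let e' := fun j : 'I_m => e (widen_ord (leqnSn m) j).
Let v := e ord_max.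

(* [v] stays away from [span e'], so bounded vectors have bounded [v]-coordinate. *)
Lemma span_net_recr_free (k : R) : 0 < k ->
  (forall x' t, span_of e' x' -> k * `|t| <= `|x' + t *: v|) ->
  span_net e' -> span_net e.
Proof.
move=> k0 hk IH r dl dl0; pose T := r / k.
have v1 : 0 < `|v| + 1 by rewrite ltr_pwDr.
have [L' hL'] := IH (r + T * `|v|) (dl / 2) ltac:(by rewrite divr_gt0).
have [G hG] := @exists_grid _ T (dl / (2 * (`|v| + 1)))
  ltac:(by rewrite divr_gt0 // mulr_gt0).
exists [seq z + s *: v | z <- L', s <- G] => x sx xr.
have [x' [t [sx' ex]]] := span_of_recr sx; subst x.
have tT : `|t| <= T by rewrite /T ler_pdivlMr // mulrC; exact: le_trans (hk _ t sx') xr.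
have [s sG ts] := hG t tT.
have x'r : `|x'| <= r + T * `|v|.
  have := ler_normB (x' + t *: v) (t *: v); rewrite addrK normrZ.
  by have := ler_wpM2r (normr_ge0 v) tT; lra.
have [z zL zx] := hL' x' sx' x'r.
exists (z + s *: v); first exact: allpairs_f.
have -> : x' + t *: v - (z + s *: v) = (x' - z) + (t - s) *: v.
  by rewrite scalerBl opprD !addrA; congr (_ + _); rewrite addrAC.
apply: le_trans (ler_normD _ _) _; rewrite normrZ.
suff : `|t - s| * `|v| <= dl / 2 by lra.
apply: le_trans (ler_wpM2r (normr_ge0 v) ts) _.
have -> : dl / (2 * (`|v| + 1)) * `|v| = dl / 2 * (`|v| / (`|v| + 1)).
  by field; rewrite gt_eqF.
rewrite -[leRHS]mulr1; apply: ler_wpM2l; first by rewrite divr_ge0 // ltW.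
by rewrite ler_pdivrMr // mul1r; lra.
Qed.

Lemma span_approx_recr_dep : ~ (exists k : R, 0 < k /\
    forall x' t, span_of e' x' -> k * `|t| <= `|x' + t *: v|) ->
  forall x' t (dl : R), 0 < dl -> span_of e' x' ->
  exists2 w, span_of e' w & `|x' + t *: v - w| <= dl.
Proof.
move=> nk x' t dl dl0 sx'.
have [->|t0] := eqVneq t 0.
  by exists x' => //; rewrite scale0r addr0 subrr normr0 ltW.
have nt : 0 < `|t| by rewrite normr_gt0.
have : ~ (forall x'' s, span_of e' x'' -> (dl / `|t|) * `|s| <= `|x'' + s *: v|).
  by move=> H; apply: nk; exists (dl / `|t|); split => //; rewrite divr_gt0.
move=> /existsNP [x'' /existsNP [s /not_implyP [sx'' /negP]]]; rewrite -ltNge => hs.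
have s0 : s != 0.
  apply: contraTneq hs => ->; rewrite normr0 mulr0 scale0r addr0.
  by rewrite ltNge normr_ge0.
have ns : 0 < `|s| by rewrite normr_gt0.
exists (x' - (t / s) *: x'').
  by rewrite -scaleN1r addrC; apply: spanZD sx'; apply: spanZ.
have -> : x' + t *: v - (x' - (t / s) *: x'') = (t / s) *: (x'' + s *: v).
  by rewrite scalerDr scalerA mulfVK // opprB addrC addrA subrK addrC.
rewrite normrZ normrM normfV; apply: le_trans (ler_wpM2l _ (ltW hs)) _.
  by rewrite divr_ge0.
by rewrite le_eqVlt; apply/orP; left; apply/eqP; field; rewrite !gt_eqF.
Qed.

Lemma span_net_recr : span_net e' -> span_net e.
Proof.
move=> IH; have [[k [k0 hk]]|nk] := pselect (exists k : R, 0 < k /\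
    forall x' t, span_of e' x' -> k * `|t| <= `|x' + t *: v|).
  exact: span_net_recr_free k0 hk IH.
move=> r dl dl0; have dl2 : 0 < dl / 2 by rewrite divr_gt0.
have [L' hL'] := IH (r + dl / 2) (dl / 2) dl2.
exists L' => x sx xr; have [x' [t [sx' ex]]] := span_of_recr sx; rewrite -/e' -/v in sx' ex.
have [w sw wx] := span_approx_recr_dep nk x' t _ dl2 sx'; rewrite -ex in wx.
have wr : `|w| <= r + dl / 2.
  by have := ler_normB x (x - w); rewrite opprB addrC subrK; lra.
have [z zL zw] := hL' w sw wr; exists z => //.
have -> : x - z = (x - w) + (w - z) by rewrite addrA subrK.
by apply: le_trans (ler_normD _ _) _; lra.
Qed.

End Recr.

Lemma span_netP {m} (e : 'I_m -> V) : span_net e.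
Proof.
elim: m e => [|m IH] e; last exact/span_net_recr/IH.
move=> r dl dl0; exists [:: 0] => x [c ->] _; exists 0; first by rewrite inE.
by rewrite big_ord0 subr0 normr0 ltW.
Qed.

End SpanNet.

Lemma each_gt_of_sum_defect {R : realDomainType} {N} (t : 'I_N -> R) (b d : R) :
  (forall i, t i <= b) -> \sum_(i < N) (b - t i) < d -> forall k, b - d < t k.
Proof.
move=> tb hs k; suff : b - t k <= \sum_(i < N) (b - t i) by move: hs; lra.
by rewrite (bigD1 k) //= lerDl sumr_ge0 // => i _; rewrite subr_ge0.
Qed.

Section SD2POctahedral.
Context {R : realType} {V : normedModType R}.

Lemma dist_normalize (z : V) : z != 0 -> `| `|z|^-1 *: z - z| = `|1 - `|z| |.
Proof.
move=> z0; rewrite -[X in _ - X]scale1r -scalerBl normrZ -[X in _ * X]normr_id.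
by rewrite -normrM mulrBl mul1r mulVf ?normr_eq0.
Qed.

Lemma sphere_net {m} (e : 'I_m -> V) {u : V} {dl : R} : `|u| = 1 -> 0 < dl -> dl < 1 ->
  exists W : seq V, [/\ (0 < size W)%N, forall w, w \in W -> `|w| = 1 &
    forall x, span_of e x -> `|x| = 1 -> exists2 w, w \in W & `|x - w| <= 2 * dl].
Proof.
move=> u1 dl0 dl1; have [L hL] := span_netP e 1 dl dl0.
pose nz (z : V) := if z == 0 then u else `|z|^-1 *: z.
exists (u :: [seq nz z | z <- L]); split => //.
  move=> w; rewrite inE => /orP[/eqP ->//|/mapP [z _ ->]].
  rewrite /nz; case: eqP => // /eqP z0.
  by rewrite normrZ normfV normr_id mulVf // normr_eq0.
move=> x sx x1; have [z zL zx] := hL x sx ltac:(by rewrite x1).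
have zx' : `|1 - `|z| | <= dl by rewrite -x1; apply: le_trans (ler_dist_dist _ _) zx.
have z0 : z != 0.
  by apply: contraTneq zx' => ->; rewrite normr0 subr0 normr1 -ltNge.
exists (nz z); first by rewrite inE map_f ?orbT.
rewrite /nz (negbTE z0); apply: le_trans (ler_distD z _ _) _.
by rewrite [X in _ + X]distrC dist_normalize //; lra.
Qed.

Lemma norm_add_ge_of_unit {x y : V} (c : R) : 0 <= c -> `|y| = 1 ->
  (x != 0 -> 2 - c <= `| `|x|^-1 *: x + y|) -> (1 - c) * (`|x| + `|y|) <= `|x + y|.
Proof.
move=> c0 y1 H; rewrite y1.
have [->|x0] := eqVneq x 0; first by rewrite normr0 !add0r y1; lra.
have := H x0; set u := `|x|^-1 *: x => hu.
set a := `|x|; have a0 : 0 < a by rewrite normr_gt0.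
have nu : `|u| = 1 by rewrite normrZ normfV normr_id mulVf // gt_eqF.
have -> : x = a *: u by rewrite /u scalerA mulfV ?gt_eqF // scale1r.
have [a1|a1] := lerP a 1.
- have -> : a *: u + y = (u + y) + (a - 1) *: u.
    by rewrite scalerBl scale1r addrCA addrAC subrr add0r.
  have := lerB_normD (u + y) ((a - 1) *: u); rewrite normrZ nu mulr1 ler0_norm; last by lra.
  nra.
- have -> : a *: u + y = a *: (u + y) + (1 - a) *: y.
    by rewrite scalerDr scalerBl scale1r -addrA [a *: y + _]addrCA subrr addr0.
  have := lerB_normD (a *: (u + y)) ((1 - a) *: y); rewrite !normrZ y1 mulr1.
  rewrite gtr0_norm // ler0_norm; last by lra.
  by have := ler_wpM2l (ltW a0) hu; nra.
Qed.

Lemma norm_add_gt_of_dual {a : V -> R} {w x : V} {s t : R} :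
  dual_ball a -> s < a w -> t < a x -> s + t < `|w + x|.
Proof.
move=> ha aw ax; have := le_trans (ler_norm _) (dual_ball_le ha (w + x)).
by rewrite (linear_funD (dual_linear_fun ha.1)); lra.
Qed.

Lemma ddiam_adherent {C : set (V -> R)} {eps : R} :
  (forall f g, C f -> C g -> forall v, `|f v - g v| <= 2 * `|v|) ->
  0 < ddiam C -> 0 < eps ->
  exists f g, [/\ C f, C g & ddiam C - eps < dnorm (fun v => f v - g v)].
Proof.
rewrite /ddiam; set D := (X in sup X) => bnd hpos e0.
have [d Dd] : D !=set0.
  apply: contrapT => nD; move: hpos; suff -> : D = set0 by rewrite sup0 ltxx.
  by apply/seteqP; split => // z Dz; apply: nD; exists z.
have supD : has_sup D.
  split; first by exists d.
  by exists 2 => _ [f [g [Cf [Cg ->]]]]; exact: dnorm_le (bnd _ _ Cf Cg).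
by have [_ [f [g [Cf [Cg ->]]]] hfg] := sup_adherent e0 supD; exists f, g.
Qed.

(* Uniform weights [1/N]: a pair of convex combinations of slices at distance
   almost [2] is nearly attained at one point [x0], and an average close to [2]
   of numbers at most [2] forces each term close to [2]. *)
Lemma wstar_SD2P_antipodal_slices {N} {xs : 'I_N -> V} {dl : R} :
  @wstar_SD2P R V -> (forall i, `|xs i| = 1) -> 0 < dl -> (0 < N)%N ->
  exists x0 (a b : 'I_N -> V -> R), [/\ `|x0| <= 1,
    forall i, wstar_slice (xs i) dl (a i), forall i, wstar_slice (xs i) dl (b i) &
    forall k, 2 - 2 * dl < a k x0 - b k x0].
Proof.
move=> sd xsu dl0 N0; have N0' : (0 < N%:R :> R) by rewrite ltr0n.
pose lam (i : 'I_N) := (N%:R : R)^-1.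
have hl i : 0 <= lam i by rewrite /lam invr_ge0 ltW.
have hs : \sum_(i < N) lam i = 1.
  by rewrite /lam sumr_const card_ord -[X in X = 1]mulr_natr mulVf // gt_eqF.
have hD := sd N lam xs (fun=> dl) hl hs xsu (fun=> dl0).
have hS i f : wstar_slice (xs i) dl f -> dual_ball f by case.
have dN0 : 0 < dl / N%:R by rewrite divr_gt0.
have [h [g [Sh Sg]]] := ddiam_adherent (fun _ _ => conv_comb_dist_le hl hs hS)
  ltac:(by rewrite hD) dN0.
rewrite hD => hg; have [x0 x01 hx0] := dnorm_adherent (conv_comb_dist_le hl hs hS Sh Sg) dN0.
have {hg}hx0 : 2 - 2 * (dl / N%:R) < `|h x0 - g x0| by move: hx0 hg => /=; lra.
have slice_le1 f i : wstar_slice (xs i) dl f -> `|f x0| <= 1.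
  by move=> /hS /dual_ball_le /(_ x0) /le_trans; apply.
suff [a [b [ha hb mean]]] : exists a b : 'I_N -> V -> R,
    [/\ forall i, wstar_slice (xs i) dl (a i), forall i, wstar_slice (xs i) dl (b i) &
      2 - 2 * (dl / N%:R) < \sum_(i < N) lam i * (a i x0 - b i x0)].
  exists x0, a, b; split => //; apply: (each_gt_of_sum_defect (fun k => a k x0 - b k x0) 2 (2 * dl)).
    move=> i; have := slice_le1 _ _ (ha i); have := slice_le1 _ _ (hb i).
    by rewrite !ler_norml; lra.
  have -> : \sum_(i < N) (2 - (a i x0 - b i x0)) =
      2 * N%:R - \sum_(i < N) (a i x0 - b i x0).
    by rewrite sumrB sumr_const card_ord mulr_natr.
  move: mean; rewrite /lam -mulr_sumr -(ltr_pM2l N0') mulVKf ?gt_eqF //.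
  have -> : N%:R * (2 - 2 * (dl / N%:R)) = 2 * N%:R - 2 * dl by field; rewrite gt_eqF.
  lra.
have [fh [hfh eh]] := Sh; have [fg [hfg eg]] := Sg.
have mean : \sum_(i < N) lam i * (fh i x0 - fg i x0) = h x0 - g x0.
  by rewrite eh eg -sumrB; apply: eq_bigr => i _; rewrite mulrBr.
have [pos|neg] := lerP 0 (h x0 - g x0).
  by exists fh, fg; split => //; rewrite mean; move: hx0; rewrite ger0_norm.
exists fg, fh; split => //.
have -> : \sum_(i < N) lam i * (fg i x0 - fh i x0) = - (h x0 - g x0).
  by rewrite -mean -sumrN; apply: eq_bigr => i _; rewrite -mulrN opprB.
by move: hx0; rewrite ltr0_norm.
Qed.

End SD2POctahedral.

Lemma wstar_SD2P_octahedral {R : realType} {V : normedModType R} :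
  (exists u : V, u != 0) -> @wstar_SD2P R V -> @octahedral R V.
Proof.
move=> [u0 hu0] sd m e eps heps.
have u1 : `| `|u0|^-1 *: u0| = 1 by rewrite normrZ normfV normr_id mulVf ?normr_eq0.
pose dl := Order.min (eps / 7) (1 / 8).
have dl0 : 0 < dl by rewrite lt_min !divr_gt0.
have [dle dl8] : dl <= eps / 7 /\ dl <= 1 / 8 by apply/andP; rewrite -le_min.
have [W [W0 Wu Wn]] := sphere_net e u1 dl0 ltac:(lra).
pose xs (i : 'I_(size W)) := nth 0 W i.
have xsu i : `|xs i| = 1 by apply/Wu/mem_nth.
have [x0 [a [b [x01 ha hb hk]]]] := wstar_SD2P_antipodal_slices sd xsu dl0 W0.
have ax0 k : 1 - 2 * dl < a k x0.
  have /le_trans /(_ x01) := dual_ball_le (hb k).1 x0.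
  by rewrite ler_norml; have := hk k; lra.
have nx0 : 1 - 2 * dl < `|x0|.
  pose k0 := Ordinal W0; have := le_trans (ler_norm _) (dual_ball_le (ha k0).1 x0).
  by have := ax0 k0; lra.
have x0_neq0 : x0 != 0 by rewrite -normr_gt0; lra.
pose y := `|x0|^-1 *: x0.
have y1 : `|y| = 1 by rewrite normrZ normfV normr_id mulVf ?normr_eq0.
have yx0 : `|y - x0| <= 2 * dl by rewrite dist_normalize // ger0_norm; lra.
exists y; split => // x sx.
apply: le_trans (norm_add_ge_of_unit (7 * dl) _ y1 _).
  by rewrite ler_wpM2r ?addr_ge0 //; lra.
  by rewrite mulr_ge0 // ltW.
move=> x_neq0; set u := `|x|^-1 *: x.
have [w wW uw] := Wn u (spanZ _ sx) ltac:(by rewrite normrZ normfV normr_id mulVf ?normr_eq0).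
have kW : (index w W < size W)%N by rewrite index_mem.
pose k := Ordinal kW.
have xk : xs k = w by rewrite /xs nth_index.
have := norm_add_gt_of_dual (ha k).1 (ha k).2 (ax0 k); rewrite xk.
have : `|w + x0| <= `|u + y| + (`|u - w| + `|y - x0|).
  have -> : w + x0 = (u + y) + ((w - u) + (x0 - y)).
    by rewrite addrACA !(addrC _ (_ - _)) !subrK.
  by apply: le_trans (ler_normD _ _) _; rewrite lerD2l (distrC u) (distrC y) ler_normD.
lra.
Qed.

Theorem theorem3p5 (R : realType) (V : completeNormedModType R)
  (hnontriv : exists x : V, x != 0) :
  (@wstar_SD2P R V <-> @octahedral R V) /\
  (@octahedral R V <-> @prop_iii R V) /\
  (@prop_iii R V <-> @prop_iii' R V).
Proof.
have ii_iii := @octahedral_prop_iii R V.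
have iii_iii' := @prop_iii_iii' R V.
have iii'_i := @prop_iii'_wstar_SD2P R V.
have i_ii := wstar_SD2P_octahedral hnontriv.
split; [|split]; split => h.
- exact: i_ii.
- exact/iii'_i/iii_iii'/ii_iii.
- exact: ii_iii.
- exact/i_ii/iii'_i/iii_iii'.
- exact: iii_iii'.
- exact/ii_iii/i_ii/iii'_i.
Qed.
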